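(* Let $k$ be a field, $n\ge 1$, and let $Q_H$ be the quiver with vertices $x_1,\ldots,x_{n+1},y_1,\ldots,y_n$ and arrows $r_i:x_i\to y_i$, $l_i:y_i\to x_{i+1}$, $a_i:x_i\to x_{i+1}$ for $i=1,\ldots,n$. Put $m_{ij}=a_{i+1}\cdots a_{j-1}$ (for $0\le i<j$, with $m_{i,i+1}$ the stationary path at $x_{i+1}$), $A_i=r_il_i$, $T_i=A_ia_i^{-1}$ and $\alpha_i=m_{0i}T_im_{0i}^{-1}$, a closed walk at $x_1$. Let $1\le i<j\le n$ and let $I$ be an admissible ideal of $kQ_H$ in which $a_im_{ij}A_j+A_im_{ij}a_j$ is a minimal relation. Then $\tilde\alpha_i=\tilde\alpha_j$ in $\pi_1(Q_H,I,x_1)$.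
   Context: An ideal $I$ of $kQ$ is admissible if $F^m\subseteq I\subseteq F^2$ for some $m\ge2$, $F$ the arrow ideal. For vertices $x,y$, $I(x,y)=e_x(kQ)e_y\cap I$; a relation $\sum_{i=1}^{r}\lambda_i w_i\in I(x,y)$ ($\lambda_i\in k^*$, $w_i$ distinct paths $x\to y$) is minimal if $r\ge2$ and no proper nonempty subsum lies in $I(x,y)$. Walks are composable sequences of arrows and formal inverses $\alpha^{-1}$. Homotopy $\sim$ is the smallest equivalence relation on walks with $\alpha\alpha^{-1}\sim e_{s(\alpha)}$, $\alpha^{-1}\alpha\sim e_{t(\alpha)}$, $w_i\sim w_j$ for paths occurring in a common minimal relation of $I$, and $u\sim v\Rightarrow wuw'\sim wvw'$. $\pi_1(Q,I,x_1)$ is the group of homotopy classes $\tilde w$ of closed walks at $x_1$. *)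

From HB Require Import structures.
From mathcomp Require Import all_boot all_algebra.
Set Implicit Arguments. Unset Strict Implicit. Unset Printing Implicit Defensive.
Import GRing.Theory.
Local Open Scope ring_scope.

(* Generic quiver Q = (V, E, s, t).  Paths are written left to right:   *)
(* a raw path is (v, [e1; ...; em]) starting at v, valid when s e1 = v  *)
(* and t e_i = s e_(i+1).  (v, [::]) is the stationary path e_v.       *)
(* Elements of the path algebra kQ are coefficient functions on raw     *)
(* paths with finite support contained in the valid paths.             *)
Section Quiver.
Variables (k : fieldType) (V E : eqType) (s t : E -> V).

Definition rpath := (V * seq E)%type.

Fixpoint valid_from (v : V) (l : seq E) : bool :=
  if l is e :: l' then (s e == v) && valid_from (t e) l' else true.

Definition pvalid (p : rpath) : bool := valid_from p.1 p.2.
Definition ptgt (p : rpath) : V := last p.1 (map t p.2).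
Definition plen (p : rpath) : nat := size p.2.

Definition pvert (p : rpath) (i : nat) : V := last p.1 (map t (take i p.2)).

Definition kQelem (f : rpath -> k) : Prop :=
  (exists sp : seq rpath, forall p, f p != 0 -> p \in sp) /\
  (forall p, f p != 0 -> pvalid p).

(* multiplication of kQ (concatenation of paths, extended bilinearly) *)
Definition kQmul (f g : rpath -> k) : rpath -> k := fun p =>
  \sum_(i < (size p.2).+1) f (p.1, take i p.2) * g (pvert p i, drop i p.2).

Definition is_ideal (I : (rpath -> k) -> Prop) : Prop :=
  [/\ forall f, I f -> kQelem f,
      I (fun _ => 0),
      forall f g, I f -> I g -> I (fun p => f p + g p),
      forall (c : k) f, I f -> I (fun p => c * f p) &
      forall f g, kQelem g -> I f -> I (kQmul g f) /\ I (kQmul f g)].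

(* F^m : the span of the paths of length >= m (F the arrow ideal) *)
Definition inFpow (m : nat) (f : rpath -> k) : Prop :=
  kQelem f /\ forall p, f p != 0 -> (m <= plen p)%N.

Definition admissible (I : (rpath -> k) -> Prop) : Prop :=
  is_ideal I /\
  exists m : nat, (2 <= m)%N /\
    (forall f, inFpow m f -> I f) /\ (forall f, I f -> inFpow 2 f).

(* A minimal relation: f = sum_i lambda_i w_i in I(x,y), lambda_i <> 0,
   w_i distinct paths x -> y (the support of f), r >= 2, and no proper
   nonempty subsum lies in I (equivalently in I(x,y)). *)
Definition minimal_rel (I : (rpath -> k) -> Prop) (f : rpath -> k) : Prop :=
  [/\ I f,
      exists x y, forall p, f p != 0 -> p.1 = x /\ ptgt p = y,
      exists w1 w2, [/\ w1 != w2, f w1 != 0 & f w2 != 0] &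
      forall S : pred rpath,
        (exists p, S p /\ f p != 0) -> (exists p, ~~ S p /\ f p != 0) ->
        ~ I (fun p => if S p then f p else 0)].

(* Walks: (v, [steps]) with a step (e, false) = e and (e, true) = e^-1. *)
Definition walk := (V * seq (E * bool))%type.
Definition ssrc (st : E * bool) : V := if st.2 then t st.1 else s st.1.
Definition stgt (st : E * bool) : V := if st.2 then s st.1 else t st.1.

Fixpoint wvalid_from (v : V) (l : seq (E * bool)) : bool :=
  if l is st :: l' then (ssrc st == v) && wvalid_from (stgt st) l' else true.
Definition wvalid (w : walk) : bool := wvalid_from w.1 w.2.
Definition wend (w : walk) : V := last w.1 (map stgt w.2).

(* composition (concatenation) of walks, used when wend w = w'.1 *)
Definition wcat (w w' : walk) : walk := (w.1, w.2 ++ w'.2).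
Definition winv (w : walk) : walk :=
  (wend w, rev (map (fun st => (st.1, ~~ st.2)) w.2)).
Definition walk_of_path (p : rpath) : walk := (p.1, map (fun e => (e, false)) p.2).

Inductive htpy (I : (rpath -> k) -> Prop) : walk -> walk -> Prop :=
| htpy_refl w : htpy I w w
| htpy_sym u v : htpy I u v -> htpy I v u
| htpy_trans u v w : htpy I u v -> htpy I v w -> htpy I u w
| htpy_cancel_l (e : E) : htpy I (s e, [:: (e, false); (e, true)]) (s e, [::])
| htpy_cancel_r (e : E) : htpy I (t e, [:: (e, true); (e, false)]) (t e, [::])
| htpy_rel (f : rpath -> k) (p q : rpath) :
    minimal_rel I f -> f p != 0 -> f q != 0 ->
    htpy I (walk_of_path p) (walk_of_path q)
| htpy_cong (w u v w' : walk) :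
    htpy I u v -> wvalid w -> wvalid w' -> wend w = u.1 -> w'.1 = wend u ->
    htpy I (wcat w (wcat u w')) (wcat w (wcat v w')).

End Quiver.

(* The quiver Q_H with N = n.+1 (so N >= 1), indices 1-based as in the *)
(* paper: vertices x_1..x_(N+1) (inl), y_1..y_N (inr); arrows           *)
(* r_i (inl (inl _)), l_i (inl (inr _)), a_i (inr _).                   *)
Section QH.
Variable n : nat.

Definition QHV : eqType := ('I_n.+2 + 'I_n.+1)%type.
Definition QHE : eqType := (('I_n.+1 + 'I_n.+1) + 'I_n.+1)%type.

Definition xv (i : nat) : QHV := inl (inord i.-1).
Definition yv (i : nat) : QHV := inr (inord i.-1).
Definition rA (i : nat) : QHE := inl (inl (inord i.-1)).
Definition lA (i : nat) : QHE := inl (inr (inord i.-1)).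
Definition aA (i : nat) : QHE := inr (inord i.-1).

Definition QHs (e : QHE) : QHV :=
  match e with
  | inl (inl i) => inl (widen_ord (leqnSn _) i)   (* r_i : x_i -> y_i *)
  | inl (inr i) => inr i                          (* l_i : y_i -> x_(i+1) *)
  | inr i => inl (widen_ord (leqnSn _) i)         (* a_i : x_i -> x_(i+1) *)
  end.
Definition QHt (e : QHE) : QHV :=
  match e with
  | inl (inl i) => inr i
  | inl (inr i) => inl (lift ord0 i)
  | inr i => inl (lift ord0 i)
  end.

(* m_(ij) = a_(i+1) ... a_(j-1), a path x_(i+1) -> x_j (0 <= i < j) *)
Definition m_list (i j : nat) : seq QHE := [seq aA q | q <- iota i.+1 (j - i.+1)].
Definition m_path (i j : nat) : rpath QHV QHE := (xv i.+1, m_list i j).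

Definition A_path (i : nat) : rpath QHV QHE := (xv i, [:: rA i; lA i]).

Definition T_walk (i : nat) : walk QHV QHE :=
  (xv i, [:: (rA i, false); (lA i, false); (aA i, true)]).

Definition alpha (i : nat) : walk QHV QHE :=
  let m := walk_of_path (m_path 0 i) in
  wcat m (wcat (T_walk i) (winv QHs QHt m)).

Definition rel_path1 (i j : nat) : rpath QHV QHE :=
  (xv i, aA i :: m_list i j ++ [:: rA j; lA j]).
Definition rel_path2 (i j : nat) : rpath QHV QHE :=
  (xv i, [:: rA i; lA i] ++ m_list i j ++ [:: aA j]).

Definition rel_elem (k : fieldType) (i j : nat) : rpath QHV QHE -> k :=
  fun p => (p == rel_path1 i j)%:R + (p == rel_path2 i j)%:R.

End QH.

(* Write P = m_(0i) and M = m_(ij) a_j = m_(i,j+1), so that m_(0j) = P a_i m_(ij) and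
   alpha_j = P (a_i m_(ij) A_j) M^-1 a_i^-1 P^-1.  The minimal relation makes
   the paths a_i m_(ij) A_j and A_i m_(ij) a_j = A_i M homotopic, which turns
   alpha_j into P A_i M M^-1 a_i^-1 P^-1; cancelling M M^-1 arrow by arrow
   leaves P A_i a_i^-1 P^-1 = alpha_i. *)
From mathcomp Require Import all_boot all_algebra zify.
Set Implicit Arguments. Unset Strict Implicit.
Import GRing.Theory.

Section Walks.
Variables (k : fieldType) (V E : eqType) (s t : E -> V).
Variable I : (rpath V E -> k) -> Prop.

Local Notation wvalid_from := (wvalid_from s t).
Local Notation htpy := (htpy s t I).
Local Notation stgt := (stgt s t).
Local Notation ssrc := (ssrc s t).
Local Notation wlast v l := (last v (map stgt l)).

(* [rev_steps] and [fwd_steps] are the step lists of [winv] and [walk_of_path]. *)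
Definition flip_step (st : E * bool) : E * bool := (st.1, ~~ st.2).
Definition rev_steps (l : seq (E * bool)) : seq (E * bool) := rev (map flip_step l).
Definition fwd_steps (l : seq E) : seq (E * bool) := map (fun e => (e, false)) l.

Lemma rev_steps_cons st l : rev_steps (st :: l) = rev_steps l ++ [:: flip_step st].
Proof. by rewrite /rev_steps /= rev_cons cats1. Qed.

Lemma fwd_steps_cat l1 l2 : fwd_steps (l1 ++ l2) = fwd_steps l1 ++ fwd_steps l2.
Proof. exact: map_cat. Qed.

Lemma wvalid_from_cat v l1 l2 :
  wvalid_from v (l1 ++ l2) = wvalid_from v l1 && wvalid_from (wlast v l1) l2.
Proof. by elim: l1 v => //= st l IH v; rewrite IH andbA. Qed.

Lemma wvalid_from_cons v st l :
  wvalid_from v (st :: l) = (ssrc st == v) && wvalid_from (stgt st) l.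
Proof. by []. Qed.

Lemma ssrc_fwd e : ssrc (e, false) = s e. Proof. by []. Qed.
Lemma ssrc_bwd e : ssrc (e, true) = t e. Proof. by []. Qed.
Lemma stgt_bwd e : stgt (e, true) = s e. Proof. by []. Qed.

Lemma ssrc_flip st : ssrc (flip_step st) = stgt st.
Proof. by case: st => e []. Qed.

Lemma stgt_flip st : stgt (flip_step st) = ssrc st.
Proof. by case: st => e []. Qed.

Lemma wvalid_from_rev_steps v l : wvalid_from v l ->
  wvalid_from (wlast v l) (rev_steps l) /\ wlast (wlast v l) (rev_steps l) = v.
Proof.
elim: l v => [|st l IH] v //= /andP[/eqP src_st valid_l].
have [valid_rev last_rev] := IH _ valid_l.
by rewrite rev_steps_cons wvalid_from_cat map_cat last_cat valid_rev last_rev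
  /= ssrc_flip eqxx stgt_flip src_st.
Qed.

Lemma htpy_cancel_step v l1 st l2 :
  wvalid_from v l1 -> ssrc st = wlast v l1 -> wvalid_from (wlast v l1) l2 ->
  htpy (v, l1 ++ st :: flip_step st :: l2) (v, l1 ++ l2).
Proof.
move=> valid1 src_st valid2.
have cancel_st : htpy (ssrc st, [:: st; flip_step st]) (ssrc st, [::]).
  by case: st {src_st} => e []; [apply: htpy_cancel_r | apply: htpy_cancel_l].
have := htpy_cong (w := (v, l1)) (w' := (wlast v l1, l2)) cancel_st valid1 valid2.
by apply; rewrite /wend //= stgt_flip.
Qed.

Lemma htpy_cancel_steps v l : forall l1 l2,
  wvalid_from v l1 -> wvalid_from (wlast v l1) l ->
  wvalid_from (wlast v l1) l2 ->
  htpy (v, l1 ++ l ++ rev_steps l ++ l2) (v, l1 ++ l2).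
Proof.
elim: l => [|st l IH] l1 l2 valid1 /=; first by move=> *; apply: htpy_refl.
move=> /andP[/eqP src_st valid_l] valid2.
apply: htpy_trans (htpy_cancel_step valid1 src_st valid2).
have last_st : wlast v (l1 ++ [:: st]) = stgt st by rewrite map_cat last_cat.
have := IH (l1 ++ [:: st]) (flip_step st :: l2).
rewrite rev_steps_cons -!catA; apply; rewrite ?last_st //.
- by rewrite wvalid_from_cat valid1 /= src_st eqxx.
- by rewrite /= ssrc_flip eqxx stgt_flip src_st.
Qed.

Lemma wend_walk_of_path (p : rpath V E) : wend s t (walk_of_path p) = ptgt t p.
Proof. by rewrite /wend /ptgt -map_comp. Qed.

Lemma htpy_minimal_rel_in_context f p q v l1 l2 :
  minimal_rel t I f -> (f p != 0)%R -> (f q != 0)%R ->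
  wvalid_from v l1 -> wlast v l1 = p.1 -> wvalid_from (ptgt t p) l2 ->
  htpy (v, l1 ++ fwd_steps p.2 ++ l2) (v, l1 ++ fwd_steps q.2 ++ l2).
Proof.
move=> min_f fp fq valid1 last1 valid2.
have := htpy_cong (w := (v, l1)) (w' := (ptgt t p, l2)) (htpy_rel s min_f fp fq).
by apply=> //; rewrite wend_walk_of_path.
Qed.

End Walks.

Section QH.
Variable n : nat.

Local Notation s := (@QHs n).
Local Notation t := (@QHt n).
Local Notation wlast v l := (last v (map (stgt s t) l)).

Lemma inord_pred_widen_lift q : (1 <= q <= n.+1)%N ->
  widen_ord (leqnSn _) (inord q.-1 : 'I_n.+1) = inord q.-1 :> 'I_n.+2 /\
  lift ord0 (inord q.-1 : 'I_n.+1) = inord q :> 'I_n.+2.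
Proof.
case: q => //= q q_le; split; apply/val_inj => /=;
  rewrite /bump /= ?add1n !inordK //; exact: leq_trans q_le (leqnSn _).
Qed.

Lemma QHs_aA q : (1 <= q <= n.+1)%N -> s (aA n q) = xv n q.
Proof. by move=> /inord_pred_widen_lift[eq_q _]; rewrite /= eq_q. Qed.

Lemma QHt_aA q : (1 <= q <= n.+1)%N -> t (aA n q) = xv n q.+1.
Proof. by move=> /inord_pred_widen_lift[_ eq_q]; rewrite /= eq_q. Qed.

Lemma QHs_rA q : (1 <= q <= n.+1)%N -> s (rA n q) = xv n q.
Proof. by move=> /inord_pred_widen_lift[eq_q _]; rewrite /= eq_q. Qed.

Lemma QHt_lA q : (1 <= q <= n.+1)%N -> t (lA n q) = xv n q.+1.
Proof. by move=> /inord_pred_widen_lift[_ eq_q]; rewrite /= eq_q. Qed.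

Lemma m_list_split i j l : (i < j < l)%N ->
  m_list n i l = m_list n i j ++ aA n j :: m_list n j l.
Proof.
move=> /andP[lt_ij lt_jl]; rewrite /m_list.
have -> : (l - i.+1 = (j - i.+1) + (l - j.+1).+1)%N by lia.
by rewrite iotaD map_cat /= (_ : (i.+1 + (j - i.+1) = j)%N) //; lia.
Qed.

Lemma m_list_rcons i j : (i < j)%N -> m_list n i j.+1 = rcons (m_list n i j) (aA n j).
Proof.
move=> lt_ij; rewrite (@m_list_split i j) ?lt_ij ?ltnSn // -cats1.
by rewrite /m_list subnn.
Qed.

Definition m_steps i j : seq (QHE n * bool) := fwd_steps (m_list n i j).

Lemma m_steps_walk i j : (i < j <= n.+2)%N ->
  wvalid_from s t (xv n i.+1) (m_steps i j) /\ wlast (xv n i.+1) (m_steps i j) = xv n j.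
Proof.
move=> /andP[]; elim: j => // j IH; rewrite ltnS leq_eqVlt => /orP[/eqP <-|lt_ij] le_j.
  by rewrite /m_steps /m_list subnn.
have [valid_m last_m] := IH lt_ij (ltnW le_j).
have j_range : (1 <= j <= n.+1)%N by lia.
rewrite /m_steps m_list_rcons // -cats1 fwd_steps_cat wvalid_from_cat map_cat last_cat.
rewrite valid_m last_m wvalid_from_cons ssrc_fwd QHs_aA // eqxx.
by split=> //; exact: QHt_aA.
Qed.

Lemma alphaE i : alpha n i =
  (xv n 1, (m_steps 0 i ++ fwd_steps [:: rA n i; lA n i]) ++
           (aA n i, true) :: rev_steps (m_steps 0 i)).
Proof. by rewrite -catA. Qed.

Lemma alpha_prefix_walk i : (1 <= i <= n.+1)%N ->
  wvalid_from s t (xv n 1) (m_steps 0 i ++ fwd_steps [:: rA n i; lA n i]) /\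
  wlast (xv n 1) (m_steps 0 i ++ fwd_steps [:: rA n i; lA n i]) = xv n i.+1.
Proof.
move=> i_range; have [valid_m last_m] := @m_steps_walk 0 i ltac:(lia).
rewrite wvalid_from_cat map_cat last_cat valid_m last_m !wvalid_from_cons.
by rewrite ssrc_fwd QHs_rA // !eqxx; split=> //; exact: QHt_lA.
Qed.

Lemma alpha_suffix_walk i : (1 <= i <= n.+1)%N ->
  wvalid_from s t (xv n i.+1) ((aA n i, true) :: rev_steps (m_steps 0 i)).
Proof.
move=> i_range; have [valid_m last_m] := @m_steps_walk 0 i ltac:(lia).
have [valid_inv _] := wvalid_from_rev_steps valid_m.
by rewrite wvalid_from_cons ssrc_bwd stgt_bwd QHt_aA // QHs_aA // eqxx -last_m.
Qed.

Lemma alpha_split i j : (0 < i < j)%N ->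
  alpha n j = (xv n 1, m_steps 0 i ++ fwd_steps (rel_path1 n i j).2 ++
    rev_steps (m_steps i j.+1) ++ (aA n i, true) :: rev_steps (m_steps 0 i)).
Proof.
move=> /andP[i_gt0 lt_ij].
rewrite alphaE -catA /rel_path1 /m_steps (@m_list_split 0 i j) ?i_gt0 // m_list_rcons //.
move: (m_list n 0 i) (m_list n i j) => l0 lm; congr (_, _).
rewrite /rev_steps /fwd_steps !map_rcons rev_rcons /= !map_cat !rev_cat /= rev_cons.
by rewrite -!cats1 -!catA.
Qed.

Lemma rel_path2E i j : (i < j)%N ->
  (rel_path2 n i j).2 = [:: rA n i; lA n i] ++ m_list n i j.+1.
Proof. by move=> lt_ij; rewrite m_list_rcons // -cats1. Qed.

Lemma ptgt_rel_path1 i j : (1 <= j <= n.+1)%N -> ptgt t (rel_path1 n i j) = xv n j.+1.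
Proof. by move=> j_range; rewrite /ptgt map_cons map_cat last_cons last_cat; exact: QHt_lA. Qed.

Lemma rel_elem_supp (k : fieldType) i j :
  (@rel_elem n k i j (rel_path1 n i j) != 0)%R /\ (@rel_elem n k i j (rel_path2 n i j) != 0)%R.
Proof.
have neq12 : (rel_path1 n i j == rel_path2 n i j) = false.
  by apply/eqP => -[]; rewrite /aA /rA.
rewrite /rel_elem (eq_sym (rel_path2 n i j)) !eqxx; move: neq12 => ->.
by rewrite addr0 add0r oner_eq0.
Qed.

End QH.

Theorem mainTheorem4 (k : fieldType) (n : nat) (i j : nat)
  (hi : (1 <= i)%N) (hij : (i < j)%N) (hj : (j <= n.+1)%N)
  (I : (rpath (QHV n) (QHE n) -> k) -> Prop) :
  admissible (@QHs n) (@QHt n) I ->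
  minimal_rel (@QHt n) I (@rel_elem n k i j) ->
  htpy (@QHs n) (@QHt n) I (alpha n i) (alpha n j).
Proof.
move=> _ min_rel.
have i_range : (1 <= i <= n.+1)%N by lia.
have j_range : (1 <= j <= n.+1)%N by lia.
have [supp1 supp2] := @rel_elem_supp n k i j.
have [valid_P last_P] := @m_steps_walk n 0 i ltac:(lia).
have [valid_M last_M] := @m_steps_walk n i j.+1 ltac:(lia).
have [valid_Minv last_Minv] := wvalid_from_rev_steps valid_M.
rewrite last_M in valid_Minv last_Minv.
have [valid_pre last_pre] := alpha_prefix_walk i_range.
apply: htpy_sym; rewrite (@alpha_split n i j) ?hi // alphaE.
apply: htpy_trans (htpy_minimal_rel_in_context min_rel supp1 supp2 valid_P last_P _) _.
  by rewrite ptgt_rel_path1 // wvalid_from_cat valid_Minv last_Minv alpha_suffix_walk.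
rewrite rel_path2E // fwd_steps_cat -/(m_steps n i j.+1) -catA catA.
by apply: htpy_cancel_steps; rewrite ?last_pre ?alpha_suffix_walk.
Qed.
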